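(* Let $G$ and $H$ be finite graphs such that $H$ fractionally tiles $G$. Let $f(K)$ denote any one of the following for a graph $K$: (a) the number of independent sets in $K$; (b) the number of proper colorings of $K$ with a fixed number $q$ of colors; (c) the total weight of the homomorphisms from $K$ to a fixed finite graph $F$, where the vertices of $F$ carry arbitrary fixed positive weights. Then $$f(G)^{1/|G|}\le f(H)^{1/|H|}.$$
   Context: A set of vertices is independent if no two of its vertices are adjacent (the empty set counts). A homomorphism from $K$ to $F$ is a map $V(K)\to V(F)$ sending adjacent vertices to adjacent vertices. Given $w:V(F)\to(0,\infty)$, the weight of a map $\phi:V(K)\to V(F)$ is $\prod_{x\in V(K)}w(\phi(x))$, and the total weight of a set of maps is the sum of their weights. A copy of $H$ in $G$ is a subgraph isomorphic to $H$; $H$ fractionally tiles $G$ means there is a finite list of copies of $H$ in $G$ such that every vertex of $G$ is covered the same number of times. $|K|$ is the number of vertices. *)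

From HB Require Import structures.
From mathcomp Require Import all_boot all_order all_algebra.
From mathcomp Require Import all_classical all_reals all_analysis.
Set Implicit Arguments. Unset Strict Implicit. Unset Printing Implicit Defensive.
Import Order.TTheory GRing.Theory Num.Theory.
Local Open Scope ring_scope.

Definition simple_graph (V : finType) (e : rel V) : Prop :=
  symmetric e /\ irreflexive e.

Definition independent (V : finType) (e : rel V) (S : {set V}) : bool :=
  [forall x in S, forall y in S, ~~ e x y].

Definition num_indep (V : finType) (e : rel V) : nat :=
  #|[set S : {set V} | independent e S]|.

Definition proper_coloring (V : finType) (e : rel V) (q : nat)
  (c : {ffun V -> 'I_q}) : bool :=
  [forall x, forall y, e x y ==> (c x != c y)].

Definition num_colorings (V : finType) (e : rel V) (q : nat) : nat :=
  #|[set c : {ffun V -> 'I_q} | proper_coloring e c]|.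

Definition is_hom (VK VF : finType) (eK : rel VK) (eF : rel VF)
  (phi : {ffun VK -> VF}) : bool :=
  [forall x, forall y, eK x y ==> eF (phi x) (phi y)].

Definition hom_weight (R : realType) (VK VF : finType) (eK : rel VK) (eF : rel VF)
  (w : VF -> R) : R :=
  \sum_(phi : {ffun VK -> VF} | is_hom eK eF phi) \prod_(x : VK) w (phi x).

Definition is_copy (VH VG : finType) (eH : rel VH) (eG : rel VG)
  (S : {set VG}) (E : rel VG) : Prop :=
  (forall x y, E x y -> eG x y) /\
  (forall x y, E x y -> x \in S /\ y \in S) /\
  exists phi : VH -> VG,
    injective phi /\ S = [set phi x | x in VH] /\
    (forall x y, eH x y = E (phi x) (phi y)).

Definition frac_tiles (VH VG : finType) (eH : rel VH) (eG : rel VG) : Prop :=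
  exists (L : seq ({set VG} * rel VG)) (k : nat),
    (0 < k)%N /\
    (forall i, (i < size L)%N -> is_copy eH eG (nth (@finset.set0 VG, fun _ _ => false) L i).1 (nth (@finset.set0 VG, fun _ _ => false) L i).2) /\
    (forall v : VG, count (fun c : {set VG} * rel VG => v \in c.1) L = k).

From HB Require Import structures.
From mathcomp Require Import all_boot all_order all_algebra.
From mathcomp Require Import all_classical all_reals all_analysis.
Set Implicit Arguments. Unset Strict Implicit. Unset Printing Implicit Defensive.
Import Order.TTheory GRing.Theory Num.Theory.
Local Open Scope ring_scope.

(* All three quantities are weighted homomorphism counts Z(K) = hom_weight K F w: independent
   sets are homomorphisms into the graph on bool whose only non-edge is (true, true), and
   q-colourings are homomorphisms into K_q.  Let copies (S_i, E_i), i < m, of H cover every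
   vertex of G exactly k times, so that m |H| = k |G|.  For x : V(G) -> V(F) put
     g_i(x) = [x is a homomorphism on copy i] * prod_{v in S_i} w(x v)^(1/k);
   on homomorphisms of G the product of the g_i is the weight of x.  Finner's inequality
   (Hoelder for functions of overlapping sets of coordinates, each coordinate shared by exactly
   k of them) bounds Z(G)^k by the product over i of the sums of g_i^k over the coordinates
   in S_i, and each of these sums is at most Z(H).  Hence Z(G)^k <= Z(H)^m.  Finner's
   inequality is proved by summing out one coordinate at a time, each step being the k-fold
   Hoelder inequality, which follows from AM-GM. *)

Lemma powR_invnK (R : realType) (a : R) (k : nat) : 0 <= a -> (0 < k)%N ->
  (a `^ k%:R^-1) ^+ k = a.
Proof.
move=> a0 k0; rewrite -powR_mulrn ?powR_ge0 // -powRrM mulVf ?powRr1 //.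
by rewrite pnatr_eq0 -lt0n.
Qed.

Section Holder.
Variables (R : realType) (I C : finType) (J : {set I}) (k : nat) (K : R).
Variables (B : I -> C -> R) (y : C -> R).
Hypotheses (Jk : #|J| = k) (k_gt0 : (0 < k)%N) (B_ge0 : forall j c, 0 <= B j c).
Hypothesis y_ge0 : forall c, 0 <= y c.
Hypothesis y_le : forall c, y c ^+ k <= K * \prod_(j in J) B j c.

Let sumB_ge0 j : 0 <= \sum_c B j c. Proof. exact: sumr_ge0. Qed.

Lemma holder_prod_pos : 0 < K -> (forall j, j \in J -> 0 < \sum_c B j c) ->
  (\sum_c y c) ^+ k <= K * \prod_(j in J) \sum_c B j c.
Proof.
move=> K_gt0 sumB_gt0.
have kR : (k%:R : R) != 0 by rewrite pnatr_eq0 -lt0n.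
have prod_gt0 : 0 < \prod_(j in J) \sum_c B j c by apply: prodr_gt0.
set P := K `^ k%:R^-1 * \prod_(j in J) (\sum_c B j c) `^ k%:R^-1.
have P_gt0 : 0 < P.
  by rewrite mulr_gt0 ?powR_gt0 // prodr_gt0 // => j /sumB_gt0 /powR_gt0.
have Pk : P ^+ k = K * \prod_(j in J) \sum_c B j c.
  rewrite exprMn powR_invnK ?ltW // -prodrXl; congr (_ * _).
  by apply: eq_bigr => j _; rewrite powR_invnK.
rewrite -Pk lerXn2r ?nnegrE ?sumr_ge0 ?(ltW P_gt0) //.
(* AM-GM for the normalized values B j c / \sum_c B j c; summed over c they give 1. *)
have AMGM c : y c / P <= (\sum_(j in J) B j c / \sum_c B j c) / k%:R.
  have [+ _] := leif_AGM (fun j (_ : j \in J) => divr_ge0 (B_ge0 j c) (sumB_ge0 j)).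
  rewrite Jk => AG; rewrite -(ler_pXn2r k_gt0); first last.
  - by rewrite nnegrE !divr_ge0 ?ler0n ?sumr_ge0 // => j _; apply: divr_ge0.
  - by rewrite nnegrE divr_ge0 // ltW.
  apply: le_trans AG; rewrite expr_div_n Pk prodf_div ler_pdivrMr ?mulr_gt0 //.
  by rewrite mulrCA divfK ?y_le ?lt0r_neq0.
have : \sum_c y c / P <= 1.
  apply: le_trans (ler_sum _ (fun c _ => AMGM c)) _.
  rewrite -mulr_suml exchange_big /= (eq_bigr (fun _ => 1)) ?sumr_const ?Jk ?divff //.
  by move=> j jJ; rewrite -mulr_suml divff ?lt0r_neq0 ?sumB_gt0.
by rewrite -mulr_suml ler_pdivrMr // mul1r.
Qed.

Lemma holder_prod : 0 <= K -> (\sum_c y c) ^+ k <= K * \prod_(j in J) \sum_c B j c.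
Proof.
move=> K_ge0.
have y0 c : K * \prod_(j in J) B j c = 0 -> y c = 0.
  move=> Z; have : y c ^+ k == 0 by rewrite eq_le exprn_ge0 // andbT -Z y_le.
  by rewrite expf_eq0 k_gt0 => /eqP.
have sumy0 : (forall c, K * \prod_(j in J) B j c = 0) ->
    (\sum_c y c) ^+ k <= K * \prod_(j in J) \sum_c B j c.
  move=> Z; rewrite big1 ?expr0n ?gtn_eqF ?mulr_ge0 ?prodr_ge0 // => c _.
  exact/y0/Z.
have [K0 | K_neq0] := eqVneq K 0.
  by apply: sumy0 => c; rewrite K0 mul0r.
have [/exists_inP [j jJ /eqP sumB0] | /exists_inPn sumB_neq0] :=
  boolP [exists j in J, \sum_c B j c == 0].
  apply: sumy0 => c; have := psumr_eq0P (fun c _ => B_ge0 j c) sumB0 (i:=c) isT.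
  by rewrite (bigD1 j) //= => ->; rewrite mul0r mulr0.
apply: holder_prod_pos; first by rewrite lt_def K_neq0.
by move=> j jJ; rewrite lt_def sumB_neq0 ?sumr_ge0.
Qed.

End Holder.

Section Finner.
Variables (R : realType) (V C : finType).
Local Notation T := {ffun V -> C}.

Definition agree_off (D : {set V}) (x0 x : T) :=
  [forall v, (v \notin D) ==> (x v == x0 v)].

Definition sum_free (D : {set V}) (h : T -> R) (x0 : T) :=
  \sum_(x | agree_off D x0 x) h x.

Definition fupd (x : T) (v : V) (c : C) : T := [ffun u => if u == v then c else x u].

Definition depends_on (S : {set V}) (h : T -> R) :=
  forall x y : T, {in S, x =1 y} -> h x = h y.

Lemma fupdE (x : T) v c u : fupd x v c u = if u == v then c else x u.
Proof. by rewrite ffunE. Qed.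

Lemma fupd_fupd (x : T) v a b : fupd (fupd x v a) v b = fupd x v b.
Proof. by apply/ffunP => u; rewrite !fupdE; case: eqP. Qed.

Lemma sum_free0 (h : T -> R) (x0 : T) : sum_free finset.set0 h x0 = h x0.
Proof.
rewrite /sum_free (big_pred1 x0) // => x /=.
apply/forallP/eqP => [x_eq|->]; last by move=> v; rewrite eqxx implybT.
by apply/ffunP => v; move/implyP: (x_eq v); rewrite inE => /(_ isT)/eqP.
Qed.

Lemma sum_freeT (h : T -> R) (x0 : T) : sum_free [set: V] h x0 = \sum_x h x.
Proof. by apply: eq_bigl => x; apply/forallP => v; rewrite finset.in_setT. Qed.

Lemma sum_free_ge0 (D : {set V}) (h : T -> R) x0 : (forall x, 0 <= h x) -> 0 <= sum_free D h x0.
Proof. by move=> h_ge0; apply: sumr_ge0. Qed.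

Lemma sum_freeU1 (D : {set V}) (v : V) (h : T -> R) x0 : v \notin D ->
  sum_free (v |: D) h x0 = \sum_c sum_free D h (fupd x0 v c).
Proof.
move=> vD; rewrite /sum_free (partition_big (fun x : T => x v) predT) //=.
apply: eq_bigr => c _; apply: eq_bigl => x.
apply/andP/forallP => [[/forallP x_eq /eqP xv] u|x_eq].
  rewrite fupdE; case: (u =P v) => [->|/eqP uv]; first by rewrite xv eqxx implybT.
  by apply/implyP => uD; move: (x_eq u); rewrite !inE (negbTE uv) (negbTE uD).
split.
  apply/forallP => u; apply/implyP; rewrite !inE negb_or => /andP[uv uD].
  by move: (x_eq u); rewrite uD fupdE (negbTE uv).
by move: (x_eq v); rewrite vD fupdE eqxx.
Qed.

Lemma sum_free_fupd (D : {set V}) (v : V) (h : T -> R) x0 c : v \notin D ->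
  sum_free D h (fupd x0 v c) = sum_free D (fun x => h (fupd x v c)) x0.
Proof.
move=> vD; rewrite /sum_free.
rewrite (reindex_onto (fun x => fupd x v c) (fun x => fupd x v (x0 v))); last first.
  move=> x /forallP x_eq; rewrite fupd_fupd; apply/ffunP => u; rewrite fupdE.
  by case: (u =P v) => [->|//]; have /implyP/(_ vD) := x_eq v; rewrite fupdE eqxx => /eqP.
apply: eq_bigl => x; rewrite fupd_fupd; apply/andP/forallP.
  move=> [/forallP x_eq /eqP E] u; apply/implyP => uD.
  case: (u =P v) => [->|/eqP uv].
    by move/ffunP: E => /(_ v); rewrite !fupdE eqxx => ->.
  by have := x_eq u; rewrite uD !fupdE (negbTE uv).
move=> x_eq; split.
  apply/forallP => u; apply/implyP => uD; rewrite !fupdE.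
  by case: (u =P v) => // _; have := x_eq u; rewrite uD.
apply/eqP/ffunP => u; rewrite !fupdE; case: (u =P v) => [->|] //.
by have := x_eq v; rewrite vD => /eqP.
Qed.

Lemma sum_free_fupd_out (D : {set V}) (v : V) (h : T -> R) x0 c : v \notin D ->
  (forall x, h (fupd x v c) = h x) -> sum_free D h (fupd x0 v c) = sum_free D h x0.
Proof. by move=> vD h_v; rewrite sum_free_fupd //; apply: eq_bigr => x _. Qed.

Lemma depends_on_fupd (S : {set V}) (h : T -> R) (v : V) (c : C) : depends_on S h -> v \notin S ->
  forall x, h (fupd x v c) = h x.
Proof.
move=> dh vS x; apply: dh => u uS; rewrite fupdE; case: eqP => // uv.
by move: vS; rewrite -uv uS.
Qed.

Variables (m k : nat) (S : 'I_m -> {set V}) (g : 'I_m -> T -> R).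
Hypotheses (k_gt0 : (0 < k)%N) (g_ge0 : forall i x, 0 <= g i x).
Hypothesis g_dep : forall i, depends_on (S i) (g i).
Hypothesis S_cover : forall v, #|[set i | v \in S i]| = k.

Lemma finner (D : {set V}) (x0 : T) :
  (sum_free D (fun x => \prod_i g i x) x0) ^+ k <=
  \prod_i sum_free (D :&: S i) (fun x => g i x ^+ k) x0.
Proof.
elim: {D}_.+1 {-2}D (ltnSn #|D|) x0 => // n IH D; rewrite ltnS => Dn x0.
have [D0 | [v vD]] := set_0Vmem D.
  rewrite D0 sum_free0 -prodrXl; apply: ler_prod => i _.
  by rewrite finset.set0I sum_free0 exprn_ge0 ?lexx.
set D' := D :\ v.
have vD' : v \notin D' by rewrite finset.setD11.
have DE : D = v |: D' by rewrite finset.setD1K.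
pose B i c := sum_free (D' :&: S i) (fun x => g i x ^+ k) (fupd x0 v c).
have B_ge0 i c : 0 <= B i c by apply: sum_free_ge0 => x; rewrite exprn_ge0.
have B_out i c : v \notin S i -> B i c = sum_free (D :&: S i) (fun x => g i x ^+ k) x0.
  move=> vS; rewrite /B sum_free_fupd_out ?inE ?negb_and ?vS ?orbT //; last first.
    by move=> x; rewrite (depends_on_fupd c (@g_dep i) vS).
  congr sum_free; apply/setP => u; rewrite DE !inE.
  by case: eqP => // ->; rewrite (negbTE vS) !andbF.
have B_in i : v \in S i -> \sum_c B i c = sum_free (D :&: S i) (fun x => g i x ^+ k) x0.
  move=> vS; rewrite /B -sum_freeU1; last by rewrite finset.in_setI negb_and vD'.
  by congr sum_free; apply/setP => u; rewrite DE !inE; case: eqP => // ->; rewrite vS.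
(* The factors with v \notin S i do not depend on the value at v; Hoelder combines the others. *)
rewrite [in X in _ <= X](bigID (fun i => v \in S i)) /= mulrC.
have -> : \prod_(i | v \in S i) sum_free (D :&: S i) (fun x => g i x ^+ k) x0 =
          \prod_(i in [set i | v \in S i]) \sum_c B i c.
  by apply: eq_big => i; rewrite ?inE // => /B_in.
rewrite {1}DE sum_freeU1 //; apply: (holder_prod (S_cover v)) => //.
- by move=> c; apply: sum_free_ge0 => x; apply: prodr_ge0.
- move=> c; apply: le_trans (IH D' _ _) _; first by rewrite (cardsD1 v D) vD in Dn.
  rewrite (bigID (fun i => v \in S i)) /= mulrC.
  have -> : \prod_(i | v \in S i) B i c = \prod_(i in [set i | v \in S i]) B i c.
    by apply: eq_bigl => i; rewrite inE.
  apply: ler_wpM2r; first by rewrite prodr_ge0.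
  by apply: ler_prod => i /(B_out _ c) <-; rewrite B_ge0 /=.
- by apply: prodr_ge0 => i _; apply: sum_free_ge0 => x; rewrite exprn_ge0.
Qed.

End Finner.

Lemma card_cover (I V : finType) (S : I -> {set V}) (n k : nat) :
  (forall i, #|S i| = n) -> (forall v, #|[set i | v \in S i]| = k) ->
  (#|I| * n = k * #|V|)%N.
Proof.
move=> S_card S_cover.
have count_pairs : (\sum_i #|S i| = \sum_v #|[set i | v \in S i]|)%N.
  rewrite (eq_bigr (fun i => \sum_v (v \in S i : nat))%N); last first.
    by move=> i _; rewrite -sum1_card big_mkcond.
  rewrite exchange_big; apply: eq_bigr => v _.
  by rewrite -sum1_card [RHS]big_mkcond; apply: eq_bigr => i _; rewrite inE.
move: count_pairs; rewrite (eq_bigr _ (fun i _ => S_card i)) (eq_bigr _ (fun v _ => S_cover v)).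
by rewrite !sum_nat_const => ->; rewrite mulnC.
Qed.

Lemma prod_cover (R : comPzSemiRingType) (I V : finType) (S : I -> {set V}) (f : V -> R) :
  \prod_i \prod_(v in S i) f v = \prod_v f v ^+ #|[set i | v \in S i]|.
Proof.
rewrite (eq_bigr (fun i => \prod_v if v \in S i then f v else 1)); last first.
  by move=> i _; rewrite big_mkcond.
rewrite exchange_big; apply: eq_bigr => v _.
by rewrite -big_mkcond -prodr_const; apply: eq_bigl => i; rewrite inE.
Qed.

Section CopyWeight.
Variables (R : realType) (VG VF : finType) (eF : rel VF).
Variables (w : VF -> R) (S : {set VG}) (E : rel VG).
Hypothesis w_ge0 : forall c, 0 <= w c.

Definition copy_weight (x : {ffun VG -> VF}) : R :=
  (is_hom E eF x)%:R * \prod_(v in S) w (x v).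

Lemma copy_weight_ge0 x : 0 <= copy_weight x.
Proof. by rewrite mulr_ge0 ?ler0n ?prodr_ge0. Qed.

Lemma copy_weight_depends_on : (forall x y, E x y -> x \in S /\ y \in S) ->
  depends_on S copy_weight.
Proof.
move=> E_supp x y xy; rewrite /copy_weight (eq_bigr _ (fun v vS => congr1 w (xy v vS))).
suff -> : is_hom E eF x = is_hom E eF y by [].
apply: eq_forallb => a; apply: eq_forallb => b.
by case/boolP: (E a b) => // /E_supp[aS bS]; rewrite !xy.
Qed.

End CopyWeight.

Lemma copy_weight_powR (R : realType) (VG VF : finType) (eF : rel VF) (w : VF -> R)
    (S : {set VG}) (E : rel VG) x (k : nat) :
  (forall c, 0 <= w c) -> (0 < k)%N ->
  copy_weight eF (fun c => w c `^ k%:R^-1) S E x ^+ k = copy_weight eF w S E x.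
Proof.
move=> w_ge0 k_gt0; rewrite exprMn -prodrXl; congr (_ * _).
  by case: is_hom; rewrite ?expr1n ?expr0n ?gtn_eqF.
by apply: eq_bigr => v _; rewrite powR_invnK.
Qed.

Lemma is_hom_subrel (VK VF : finType) (e e' : rel VK) (eF : rel VF) (x : {ffun VK -> VF}) :
  (forall a b, e' a b -> e a b) -> is_hom e eF x -> is_hom e' eF x.
Proof.
move=> sub /forallP x_hom; apply/forallP => a; apply/forallP => b; apply/implyP => /sub eab.
by move/forallP: (x_hom a) => /(_ b) /implyP; apply.
Qed.

Section Tiling.
Variables (R : realType) (VG VH VF : finType) (eG : rel VG) (eH : rel VH) (eF : rel VF).
Variable w : VF -> R.
Hypothesis w_gt0 : forall c, 0 < w c.

Let w_ge0 c : 0 <= w c. Proof. exact: ltW. Qed.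

Lemma hom_weight_ge0 (V : finType) (e : rel V) : 0 <= hom_weight e eF w.
Proof. by apply: sumr_ge0 => x _; apply: prodr_ge0. Qed.

Lemma sum_free_copy_weight_le (S : {set VG}) (E : rel VG) (x0 : {ffun VG -> VF}) :
  is_copy eH eG S E -> sum_free S (copy_weight eF w S E) x0 <= hom_weight eH eF w.
Proof.
move=> [_ [_ [phi [phi_inj [S_def eH_def]]]]].
pose restr (x : {ffun VG -> VF}) : {ffun VH -> VF} := [ffun u => x (phi u)].
pose A := [set x | agree_off S x0 x].
have restr_inj : {in A &, injective restr}.
  move=> x x'; rewrite !inE => /forallP x_eq /forallP x'_eq /ffunP restr_eq.
  apply/ffunP => v; have [vS | vNS] := boolP (v \in S).
    by move: vS; rewrite S_def => /imsetP[u _ ->]; have := restr_eq u; rewrite !ffunE.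
  by move: (x_eq v) (x'_eq v); rewrite vNS /= => /eqP-> /eqP->.
have restr_weight x : copy_weight eF w S E x <=
    (is_hom eH eF (restr x))%:R * \prod_u w (restr x u).
  rewrite /copy_weight S_def big_imset => [|a b _ _ /phi_inj //].
  have -> : \prod_u w (restr x u) = \prod_(u in VH) w (x (phi u)).
    by apply: eq_bigr => u _; rewrite ffunE.
  apply: ler_wpM2r; first exact: prodr_ge0.
  have hom_restr : is_hom E eF x -> is_hom eH eF (restr x).
    move=> /forallP x_hom; apply/forallP => a; apply/forallP => b.
    by rewrite eH_def !ffunE; move/forallP: (x_hom (phi a)); apply.
  by rewrite ler_nat; case: (is_hom E eF x) hom_restr => // ->.
have -> : hom_weight eH eF w = \sum_y (is_hom eH eF y)%:R * \prod_u w (y u).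
  by rewrite /hom_weight big_mkcond; apply: eq_bigr => y _; case: is_hom; rewrite ?mul1r ?mul0r.
apply: le_trans (_ : \sum_(y in restr @: A) (is_hom eH eF y)%:R * \prod_u w (y u) <= _).
  rewrite big_imset // [X in _ <= X](eq_bigl (agree_off S x0)) => [|x]; last by rewrite inE.
  exact: ler_sum.
rewrite [X in _ <= X](bigID (mem (restr @: A))) /= lerDl sumr_ge0 // => y _.
by rewrite mulr_ge0 ?ler0n ?prodr_ge0.
Qed.

Variables (m k : nat) (S : 'I_m -> {set VG}) (E : 'I_m -> rel VG).
Hypotheses (k_gt0 : (0 < k)%N) (copy : forall i, is_copy eH eG (S i) (E i)).
Hypothesis S_cover : forall v, #|[set i | v \in S i]| = k.

Lemma hom_weight_cover_expn : hom_weight eG eF w ^+ k <= hom_weight eH eF w ^+ m.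
Proof.
have [x0 _ | no_fun] := pickP (fun _ : {ffun VG -> VF} => true); last first.
  rewrite /hom_weight big_pred0 => [|x]; last by have := no_fun x.
  by rewrite expr0n gtn_eqF // exprn_ge0 // hom_weight_ge0.
(* Each vertex lies in exactly k copies, so each copy carries the k-th root of its weights. *)
pose g i := copy_weight eF (fun c => w c `^ k%:R^-1) (S i) (E i).
have g_ge0 i x : 0 <= g i x by apply: copy_weight_ge0 => c; rewrite powR_ge0.
have g_dep i : depends_on (S i) (g i).
  by apply: copy_weight_depends_on; have [_ []] := copy i.
have g_prod x : is_hom eG eF x -> \prod_i g i x = \prod_v w (x v).
  move=> x_hom; rewrite (eq_bigr (fun i => \prod_(v in S i) w (x v) `^ k%:R^-1)); last first.
    move=> i _; have [E_sub _] := copy i.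
    by rewrite /g /copy_weight (is_hom_subrel E_sub x_hom) mul1r.
  by rewrite prod_cover; apply: eq_bigr => v _; rewrite S_cover powR_invnK.
have hom_weight_le : hom_weight eG eF w <= sum_free [set: VG] (fun x => \prod_i g i x) x0.
  rewrite sum_freeT (bigID (is_hom eG eF)) /= -[hom_weight _ _ _]addr0.
  apply: lerD; last by apply: sumr_ge0 => x _; apply: prodr_ge0.
  by rewrite (eq_bigr _ (fun x hx => g_prod x hx)); exact: lexx.
apply: le_trans (_ : (sum_free [set: VG] (fun x => \prod_i g i x) x0) ^+ k <= _).
  by rewrite lerXn2r ?nnegrE ?hom_weight_ge0 ?sum_free_ge0 // => x; apply: prodr_ge0.
apply: le_trans (finner k_gt0 g_ge0 g_dep S_cover _ x0) _.
rewrite -[in X in _ <= X](card_ord m) -prodr_const; apply: ler_prod => i _.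
rewrite sum_free_ge0 => [|x]; last exact: exprn_ge0.
rewrite finset.setTI (_ : sum_free _ _ x0 = sum_free (S i) (copy_weight eF w (S i) (E i)) x0).
  exact: sum_free_copy_weight_le.
by apply: eq_bigr => x _; exact: copy_weight_powR.
Qed.

End Tiling.

Lemma frac_tilesP (VG VH : finType) (eG : rel VG) (eH : rel VH) : frac_tiles eH eG ->
  exists m k (S : 'I_m -> {set VG}) (E : 'I_m -> rel VG),
    [/\ (0 < k)%N, forall i, is_copy eH eG (S i) (E i) & forall v, #|[set i | v \in S i]| = k].
Proof.
move=> [L [k [k_gt0 [L_copy L_count]]]].
pose d : {set VG} * rel VG := (finset.set0, fun _ _ => false).
exists (size L), k, (fun i => (nth d L i).1), (fun i => (nth d L i).2).
split=> // [i | v]; first exact: L_copy.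
by rewrite -(L_count v) -sum1_count (big_nth d) big_mkord sum_nat_cond_const muln1.
Qed.

Lemma powR_inv_le_of_expn_le (R : realType) (a b : R) (m k nG nH : nat) :
  0 <= a -> 0 <= b -> (0 < k)%N -> (0 < nG)%N -> (m * nH = k * nG)%N ->
  a ^+ k <= b ^+ m -> a `^ nG%:R^-1 <= b `^ nH%:R^-1.
Proof.
move=> a_ge0 b_ge0 k_gt0 nG_gt0 mnH_eq ab_le.
have /andP[m_gt0 nH_gt0] : (0 < m)%N && (0 < nH)%N by rewrite -muln_gt0 mnH_eq muln_gt0 k_gt0.
have root_expn (c : R) (j n : nat) : 0 <= c -> (0 < j)%N ->
    c `^ n%:R^-1 = (c ^+ j) `^ (j * n)%:R^-1.
  move=> c_ge0 j_gt0; rewrite -powR_mulrn // -powRrM natrM invfM mulVKf //.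
  by rewrite pnatr_eq0 -lt0n.
rewrite (root_expn a k) // (root_expn b m) // mnH_eq.
by apply: ge0_ler_powR; rewrite ?nnegrE ?invr_ge0 ?ler0n ?exprn_ge0.
Qed.

Lemma hom_weight_tiling (R : realType) (VG VH VF : finType) (eG : rel VG) (eH : rel VH)
    (eF : rel VF) (w : VF -> R) :
  (0 < #|VG|)%N -> (forall c, 0 < w c) -> frac_tiles eH eG ->
  hom_weight eG eF w `^ #|VG|%:R^-1 <= hom_weight eH eF w `^ #|VH|%:R^-1.
Proof.
move=> VG_gt0 w_gt0 /frac_tilesP [m [k [S [E [k_gt0 copy S_cover]]]]].
have card_eq : (m * #|VH| = k * #|VG|)%N.
  rewrite -[m]card_ord; apply: card_cover S_cover => i.
  by have [_ [_ [phi [phi_inj [-> _]]]]] := copy i; rewrite card_imset.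
apply: (powR_inv_le_of_expn_le _ _ k_gt0 VG_gt0 card_eq); rewrite ?(hom_weight_ge0 eF w_gt0) //.
exact: (hom_weight_cover_expn eF w_gt0 k_gt0 copy S_cover).
Qed.

Lemma hom_weight1 (R : realType) (VK VF : finType) (eK : rel VK) (eF : rel VF) :
  hom_weight eK eF (fun _ => 1 : R) = #|[set phi | is_hom eK eF phi]|%:R.
Proof.
rewrite /hom_weight [LHS](eq_bigr (fun _ => 1)) => [|phi _]; last exact: big1_eq.
by rewrite -sum1_card natr_sum; apply: eq_bigl => phi; rewrite inE.
Qed.

Lemma num_indepE (V : finType) (e : rel V) :
  num_indep e = #|[set phi | is_hom e (fun a b : bool => ~~ (a && b)) phi]|.
Proof.
rewrite /num_indep -!sum1_card.
rewrite (reindex (fun S : {set V} => [ffun v => v \in S])) /=; last first.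
  exists (fun phi : {ffun V -> bool} => [set v | phi v]) => [S _|phi _].
    by apply/setP => v; rewrite inE ffunE.
  by apply/ffunP => v; rewrite ffunE inE.
apply: eq_bigl => S; rewrite !inE /independent /is_hom.
apply/forall_inP/forallP => [S_indep a|S_hom a aS].
  apply/forallP => b; apply/implyP => eab; rewrite !ffunE.
  apply/negP => /andP[aS bS].
  by move/forall_inP: (S_indep a aS) => /(_ b bS); rewrite eab.
apply/forall_inP => b bS; apply/negP => eab.
by move/forallP: (S_hom a) => /(_ b) /implyP /(_ eab); rewrite !ffunE aS bS.
Qed.

Lemma num_coloringsE (V : finType) (e : rel V) (q : nat) :
  num_colorings e q = #|[set phi | is_hom e (fun a b : 'I_q => a != b) phi]|.
Proof. by []. Qed.

Theorem proposition5p2 (R : realType)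
  (VG : finType) (eG : rel VG) (VH : finType) (eH : rel VH)
  (hG : simple_graph eG) (hH : simple_graph eH)
  (hGne : (0 < #|VG|)%N)
  (htile : frac_tiles eH eG) :
  (* (a) independent sets *)
  powR ((num_indep eG)%:R : R) (#|VG|%:R^-1)
    <= powR ((num_indep eH)%:R : R) (#|VH|%:R^-1)
  /\
  (* (b) proper q-colorings *)
  (forall q : nat,
    powR ((num_colorings eG q)%:R : R) (#|VG|%:R^-1)
      <= powR ((num_colorings eH q)%:R : R) (#|VH|%:R^-1))
  /\
  (* (c) weighted homomorphism counts into a fixed finite graph F *)
  (forall (VF : finType) (eF : rel VF) (w : VF -> R),
    symmetric eF -> (forall v, 0 < w v) ->
    powR (hom_weight eG eF w) (#|VG|%:R^-1)
      <= powR (hom_weight eH eF w) (#|VH|%:R^-1)).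
Proof.
have tiling (VF : finType) (eF : rel VF) (w : VF -> R) (w_gt0 : forall c, 0 < w c) :=
  @hom_weight_tiling R VG VH VF eG eH eF w hGne w_gt0 htile.
split; first by rewrite !num_indepE -!hom_weight1; apply: tiling => _; apply: ltr01.
split; last by move=> VF eF w _; apply: tiling.
by move=> q; rewrite !num_coloringsE -!hom_weight1; apply: tiling => _; apply: ltr01.
Qed.
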